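(* Let $G$ be a connected graph that is not complete. Then $\dim_{n\ell}(G)=1$ if and only if there exists a vertex $x\in V(G)$ such that for every integer $k$ with $0\le k\le \mathrm{diam}(G)$ the distance level $L_k(x)=\{u\in V(G): d_G(x,u)=k\}$ induces a complete subgraph of $G$.
   Context: Graphs are finite, simple and connected; $d_G(u,v)$ is the shortest-path distance and $\mathrm{diam}(G)$ the largest distance in $G$. A set $X\subseteq V(G)$ resolves two vertices $u,v$ if some $x\in X$ satisfies $d_G(u,x)\neq d_G(v,x)$. $X$ is a resolving set if it resolves every pair of distinct vertices; the metric dimension $\dim(G)$ is the minimum size of a resolving set. $X$ is a nonlocal resolving set if it resolves every pair of distinct non-adjacent vertices; the nonlocal metric dimension $\dim_{n\ell}(G)$ is the minimum size of a nonlocal resolving set (so $\dim_{n\ell}(K_n)=0$), and a nonlocal metric basis is a nonlocal resolving set of this minimum size. *)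

From mathcomp Require Import all_boot.
Set Implicit Arguments. Unset Strict Implicit. Unset Printing Implicit Defensive.

Definition simple_graph (T : finType) (e : rel T) : Prop :=
  symmetric e /\ irreflexive e.

Definition connected_graph (T : finType) (e : rel T) : Prop :=
  forall x y : T, connect e x y.

Fixpoint within (T : finType) (e : rel T) (n : nat) (x y : T) : bool :=
  match n with
  | 0 => x == y
  | n'.+1 => (x == y) || [exists z, e x z && within e n' z y]
  end.

(* Shortest-path distance: the least n with a walk of length <= n.
   In a connected graph on #|T| vertices it is < #|T|, so the search
   range iota 0 #|T| suffices. *)
Definition dist (T : finType) (e : rel T) (x y : T) : nat :=
  find (fun n => within e n x y) (iota 0 #|T|).

Definition diam (T : finType) (e : rel T) : nat :=
  \max_(x : T) \max_(y : T) dist e x y.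

Definition level (T : finType) (e : rel T) (x : T) (k : nat) : {set T} :=
  [set u | dist e x u == k].

Definition is_clique (T : finType) (e : rel T) (S : {set T}) : Prop :=
  forall u v, u \in S -> v \in S -> u != v -> e u v.

Definition complete_graph (T : finType) (e : rel T) : Prop :=
  forall u v : T, u != v -> e u v.

Definition nonlocal_resolving (T : finType) (e : rel T) (X : {set T}) : bool :=
  [forall u, forall v, ((u != v) && ~~ e u v) ==>
     [exists x in X, dist e u x != dist e v x]].

(* Nonlocal metric dimension: minimum size of a nonlocal resolving set
   ([set: T] is always one). *)
Definition dim_nl (T : finType) (e : rel T) : nat :=
  #|[arg min_(X < [set: T] | nonlocal_resolving e X) #|X|]|.

From mathcomp Require Import all_boot.
Set Implicit Arguments.
Unset Strict Implicit.
Unset Printing Implicit Defensive.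

(* A single vertex x resolves two distinct non-adjacent vertices u, v exactly
   when they lie in different distance levels of x; so {x} is a nonlocal
   resolving set iff every level L_k(x) is a clique.  Since a complete graph is
   the only graph resolved by the empty set, a non-complete graph has
   dim_nl = 1 iff some singleton is nonlocal resolving. *)

Section Distance.

Variables (T : finType) (e : rel T).

Lemma within_refl n x : within e n x x.
Proof. by case: n => [|n] /=; rewrite eqxx. Qed.

Lemma within_rcons n x z y : within e n x z -> e z y -> within e n.+1 x y.
Proof.
elim: n x => [|n IHn] x /=.
  by move/eqP=> -> ezy; apply/orP; right; apply/existsP; exists y; rewrite ezy eqxx.
case/orP=> [/eqP -> ezy | /existsP [w /andP [exw wz]] ezy].
  by apply/orP; right; apply/existsP; exists y; rewrite ezy /= eqxx.
by apply/orP; right; apply/existsP; exists w; rewrite exw; exact: IHn wz ezy.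
Qed.

Lemma within_sym n x y : symmetric e -> within e n x y -> within e n y x.
Proof.
move=> se; elim: n x y => [|n IHn] x y; first by rewrite /= eq_sym.
case/orP=> [/eqP -> | /existsP [z /andP [exz zy]]]; first exact: within_refl.
by apply: within_rcons (IHn _ _ zy) _; rewrite se.
Qed.

Lemma dist_sym x y : symmetric e -> dist e x y = dist e y x.
Proof. by move=> se; apply: eq_find => n; apply/idP/idP; apply: within_sym. Qed.

Lemma dist_eq0 x y : (dist e x y == 0) = (x == y).
Proof.
rewrite /dist; have : 0 < #|T| by apply/card_gt0P; exists x.
by case: #|T| => [|n] //= _; case: (x == y).
Qed.

Lemma dist_refl x : dist e x x = 0.
Proof. by apply/eqP; rewrite dist_eq0. Qed.

Lemma dist_le_diam x y : dist e x y <= diam e.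
Proof.
apply: leq_trans (leq_bigmax x).
exact: (leq_bigmax (F := fun y => dist e x y) y).
Qed.

End Distance.

Section NonlocalResolving.

Variables (T : finType) (e : rel T).

Lemma nonlocal_resolvingT : nonlocal_resolving e [set: T].
Proof.
apply/forallP=> u; apply/forallP=> v; apply/implyP=> /andP [nuv _].
by apply/existsP; exists v; rewrite in_setT /= dist_refl dist_eq0.
Qed.

Lemma nonlocal_resolving0 : nonlocal_resolving e set0 -> complete_graph e.
Proof.
move=> res0 u v nuv; apply/negPn/negP=> neuv.
move/forallP: res0 => /(_ u) /forallP /(_ v).
by rewrite nuv neuv => /existsP [y]; rewrite inE.
Qed.

Lemma nonlocal_resolving1 x : symmetric e ->
  nonlocal_resolving e [set x] <->
  (forall k, k <= diam e -> is_clique e (level e x k)).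
Proof.
move=> se; split.
  move=> resx k _ u v; rewrite !inE => /eqP du /eqP dv nuv.
  apply/negPn/negP=> neuv.
  move/forallP: resx => /(_ u) /forallP /(_ v); rewrite nuv neuv /=.
  case/existsP=> y /andP [/set1P -> ].
  by rewrite (dist_sym u) // (dist_sym v) // du dv eqxx.
move=> levels_clique; apply/forallP=> u; apply/forallP=> v.
apply/implyP=> /andP [nuv neuv]; apply/existsP; exists x; rewrite set11 /=.
apply: contra neuv => /eqP duv.
apply: (levels_clique _ (dist_le_diam e x u)) nuv; rewrite !inE //.
by rewrite (dist_sym x v) // -duv dist_sym.
Qed.

Lemma dim_nl_spec : exists2 X, nonlocal_resolving e X & #|X| = dim_nl e.
Proof.
rewrite /dim_nl; case: arg_minnP => [|X resX _]; first exact: nonlocal_resolvingT.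
by exists X.
Qed.

Lemma dim_nl_min X : nonlocal_resolving e X -> dim_nl e <= #|X|.
Proof.
rewrite /dim_nl; case: arg_minnP => [|Y _ minY]; first exact: nonlocal_resolvingT.
exact: minY.
Qed.

Lemma dim_nl_gt0 : ~ complete_graph e -> 0 < dim_nl e.
Proof.
move=> ncomplete; have [X resX <-] := dim_nl_spec.
rewrite card_gt0; apply/eqP=> X0; apply: ncomplete.
by apply: nonlocal_resolving0; rewrite -X0.
Qed.

Lemma dim_nl_eq1 : ~ complete_graph e ->
  dim_nl e = 1 <-> exists x, nonlocal_resolving e [set x].
Proof.
move=> ncomplete; split.
  have [X resX <-] := dim_nl_spec.
  by move/eqP/cards1P=> [x X1]; exists x; rewrite -X1.
case=> x resx; apply/eqP; rewrite eqn_leq dim_nl_gt0 // andbT.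
by rewrite -(cards1 x) dim_nl_min.
Qed.

End NonlocalResolving.

Theorem proposition2p1 (T : finType) (e : rel T) :
  simple_graph e -> connected_graph e -> ~ complete_graph e ->
  (dim_nl e = 1 <->
   exists x : T, forall k : nat, k <= diam e -> is_clique e (level e x k)).
Proof.
move=> [se _] _ ncomplete.
apply: iff_trans (dim_nl_eq1 ncomplete) _.
by split=> -[x resx]; exists x; apply/(nonlocal_resolving1 x se).
Qed.
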